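(* Let $(e,f)$ be an edge of $\Sigma$ contained in the two triangles $\sigma=(e,f,g)$ and $\sigma'=(e,f,g')$, and suppose $(e,f)$ is carved out by the ratio $m:m'$ with $m,m'$ coprime monomials in $R$, labelled so that $g(m'/m)>0$. Let $\Gamma_\sigma=\{r_\chi\}_{\chi\in G^\vee}$ and $\Gamma_{\sigma'}=\{r'_\chi\}_{\chi\in G^\vee}$ be the $G$-graphs of the charts $A_\sigma$, $A_{\sigma'}$. If $r_\chi\neq r'_\chi$ for some $\chi\in G^\vee$, then $m\mid r_\chi$ and $m'\mid r'_\chi$.
   Context: $G\subset SL_3(\mathbb{C})$ finite abelian, $R=\mathbb{C}[x,y,z]$; $Y=G\text{-Hilb}(\mathbb{C}^3)$ with universal family $\mathcal{M}$ normalised so that $\mathcal{M}^G\cong\mathcal{O}_Y$ (viewing $\mathcal{M}$ as a sheaf of $(R\rtimes G)\otimes\mathcal{O}_Y$-modules on $Y$). Laurent monomials $x^{m_1}y^{m_2}z^{m_3}$ are identified with $(m_1,m_2,m_3)\in\mathbb{Z}^3$; $M$ is the sublattice of $G$-invariant Laurent monomials and $L\subset\mathbb{Q}^3$ its dual lattice, with pairing $e(m)=\sum e_im_i$; for $e\in L$ and a Laurent monomial $m$, $e(m)$ equals the ($\mathbb{Q}$-)valuation of $m$ along the toric divisor $E_e$. $Y$ is the toric variety given by a triangulation $\Sigma$ of the junior simplex $\Delta=\{e\in\mathbb{R}^3_{\ge0}:\sum e_i=1\}$ with vertices $L\cap\Delta$; a triangle $\sigma$ of $\Sigma$ gives an affine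 toric chart $A_\sigma\cong\mathbb{C}^3$ with torus fixed point $E_\sigma$. An edge $(e,f)$ of $\Sigma$ is carved out by $m:m'$ if $m,m'$ are coprime monomials in $R$ with $m/m'$ generating the rank-one sublattice of $M$ orthogonal to $e$ and $f$. There is a unique embedding of $\mathcal{M}$ as $(R\rtimes G)\otimes\mathcal{O}_Y$-modules into the constant sheaf $\mathbb{C}(x,y,z)$ restricting to the identity on $\mathcal{O}_Y=\mathcal{M}^G$; under it, for each $\chi\in G^\vee$ the isotypic summand of $\mathcal{M}$ of character $\chi$ is, on each chart $A_\sigma$, generated as an $\mathcal{O}_Y$-module by a unique monomial $r_\chi$ of character $\chi$. The set $\Gamma_\sigma=\{r_\chi\}_{\chi\in G^\vee}$ is the $G$-graph of $A_\sigma$; it is exactly the set of monomials of $R$ not lying in the ideal of the $G$-cluster parametrised by $E_\sigma$. *)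

From HB Require Import structures.
From mathcomp Require Import all_boot all_order all_algebra all_field.
Set Implicit Arguments. Unset Strict Implicit. Unset Printing Implicit Defensive.
Import Order.TTheory GRing.Theory Num.Theory.
Local Open Scope ring_scope.

(* Laurent monomials x^a y^b z^c  <->  (a,b,c) in Z^3 *)
Definition lmon := (int * int * int)%type.
(* monomials of R = C[x,y,z]  <->  (a,b,c) in N^3 *)
Definition nmon := (nat * nat * nat)%type.
(* points of Q^3 (the ambient space of L) *)
Definition pt := (rat * rat * rat)%type.
(* elements of G: diagonal matrices diag(a,b,c) *)
Definition gelt := (algC * algC * algC)%type.

Definition toL (n : nmon) : lmon := ((n.1.1)%:Z, (n.1.2)%:Z, (n.2)%:Z).
(* quotient of Laurent monomials u / v *)
Definition ldiv (u v : lmon) : lmon := (u.1.1 - v.1.1, u.1.2 - v.1.2, u.2 - v.2).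

Definition pairing (e : pt) (u : lmon) : rat :=
  e.1.1 * (u.1.1)%:~R + e.1.2 * (u.1.2)%:~R + e.2 * (u.2)%:~R.

(* value at g of the character of G by which G acts on the monomial u *)
Definition chr (g : gelt) (u : lmon) : algC :=
  g.1.1 ^ u.1.1 * g.1.2 ^ u.1.2 * g.2 ^ u.2.

Definition gmul (g h : gelt) : gelt := (g.1.1 * h.1.1, g.1.2 * h.1.2, g.2 * h.2).

(* G is a finite (listed) subgroup of the diagonal matrices of SL_3(C):
   contains 1, closed under products (hence a group, being finite and
   consisting of invertible elements), every element has determinant 1. *)
Definition diag_SL3_group (G : seq gelt) : Prop :=
  [/\ (1, 1, 1) \in G,
      (forall g h, g \in G -> h \in G -> gmul g h \in G) &
      (forall g, g \in G -> g.1.1 * g.1.2 * g.2 = 1)].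

Definition inM (G : seq gelt) (u : lmon) : Prop :=
  forall g, g \in G -> chr g u = 1.

Definition samechar (G : seq gelt) (u v : lmon) : Prop :=
  forall g, g \in G -> chr g u = chr g v.

Definition inL (G : seq gelt) (e : pt) : Prop :=
  forall u, inM G u -> pairing e u \is a Num.int.

Definition inDelta (e : pt) : Prop :=
  [/\ 0 <= e.1.1, 0 <= e.1.2, 0 <= e.2 & e.1.1 + e.1.2 + e.2 = 1].

Definition ptadd (p q : pt) : pt := (p.1.1 + q.1.1, p.1.2 + q.1.2, p.2 + q.2).
Definition ptscale (a : rat) (p : pt) : pt := (a * p.1.1, a * p.1.2, a * p.2).

Definition det3 (a b c : pt) : rat :=
  a.1.1 * (b.1.2 * c.2 - b.2 * c.1.2)
  - a.1.2 * (b.1.1 * c.2 - b.2 * c.1.1)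
  + a.2 * (b.1.1 * c.1.2 - b.1.2 * c.1.1).

Definition triangle := (pt * pt * pt)%type.
Definition tverts (t : triangle) : seq pt := [:: t.1.1; t.1.2; t.2].

Definition convex_comb (t : triangle) (a b c : rat) (p : pt) : Prop :=
  [/\ 0 <= a, 0 <= b, 0 <= c, a + b + c = 1 &
      p = ptadd (ptadd (ptscale a t.1.1) (ptscale b t.1.2)) (ptscale c t.2)].

Definition in_hull (t : triangle) (p : pt) : Prop :=
  exists a b c, convex_comb t a b c p.

Definition triangulation (G : seq gelt) (S : seq triangle) : Prop :=
  [/\
      (forall t, t \in S ->
         (forall v, v \in tverts t -> inL G v /\ inDelta v) /\
         det3 t.1.1 t.1.2 t.2 != 0),
      (forall v, inL G v -> inDelta v -> exists2 t, t \in S & v \in tverts t),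
      (forall p, inDelta p -> exists2 t, t \in S & in_hull t p) &
      (* two triangles meet in a common face *)
      (forall t t' p, t \in S -> t' \in S -> in_hull t p -> in_hull t' p ->
         exists a b c, convex_comb t a b c p /\
           [/\ a != 0 -> t.1.1 \in tverts t',
               b != 0 -> t.1.2 \in tverts t' &
               c != 0 -> t.2 \in tverts t'])].

Definition tri_in (S : seq triangle) (e f g : pt) : Prop :=
  exists2 t, t \in S & perm_eq (tverts t) [:: e; f; g].

(* r in R generates, on the chart A_sigma (sigma = (e,f,g)), the isotypic summand
   of the universal family of the character of r: every monomial n of R with the
   same character equals r times a regular function n/r in C[sigma^vee cap M],
   i.e. e(n/r), f(n/r), g(n/r) >= 0.  Then r = r_chi, an element of Gamma_sigma. *)
Definition Ggraph_elt (G : seq gelt) (e f g : pt) (r : nmon) : Prop :=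
  forall n : nmon, samechar G (toL n) (toL r) ->
    [/\ 0 <= pairing e (ldiv (toL n) (toL r)),
        0 <= pairing f (ldiv (toL n) (toL r)) &
        0 <= pairing g (ldiv (toL n) (toL r))].

(* Y = G-Hilb: on every chart, each character chi has its generator r_chi *)
Definition GHilb_family (G : seq gelt) (S : seq triangle) : Prop :=
  forall t, t \in S -> forall u : lmon,
    exists r : nmon, samechar G (toL r) u /\ Ggraph_elt G t.1.1 t.1.2 t.2 r.

Definition mcoprime (m m' : nmon) : Prop :=
  [/\ minn m.1.1 m'.1.1 = 0, minn m.1.2 m'.1.2 = 0 & minn m.2 m'.2 = 0]%N.

Definition mdvd (m r : nmon) : Prop :=
  [/\ m.1.1 <= r.1.1, m.1.2 <= r.1.2 & m.2 <= r.2]%N.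

Definition lscale (k : int) (u : lmon) : lmon := (k * u.1.1, k * u.1.2, k * u.2).

Definition carved (G : seq gelt) (e f : pt) (m m' : nmon) : Prop :=
  [/\ mcoprime m m',
      inM G (ldiv (toL m) (toL m')),
      pairing e (ldiv (toL m) (toL m')) = 0,
      pairing f (ldiv (toL m) (toL m')) = 0 &
      (forall u, inM G u -> pairing e u = 0 -> pairing f u = 0 ->
         exists k : int, u = lscale k (ldiv (toL m) (toL m')))].

From HB Require Import structures.
From mathcomp Require Import all_boot all_order all_algebra all_field ring zify.
Import Order.TTheory GRing.Theory Num.Theory.
Local Open Scope ring_scope.

(* Let r = r_chi and r' = r'_chi have the same character.  Then r'/r is a
   G-invariant Laurent monomial.  Since r generates the chi-summand on A_sigma,
   r'/r is regular there: e, f, g are >= 0 on it; symmetrically e, f are >= 0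
   on r/r'.  Hence e(r'/r) = f(r'/r) = 0, so r'/r lies in the rank-one lattice
   orthogonal to the edge and r'/r = (m/m')^k for an integer k.  As
   g(m'/m) > 0 and g(r'/r) >= 0 we get k <= 0, and k <> 0 since r <> r'.
   Writing N = -k > 0, we have r * m'^N = r' * m^N, and coprimality of m, m'
   forces m | r and m' | r', coordinate by coordinate. *)

Lemma SL3_diag_neq0 {g : gelt} : g.1.1 * g.1.2 * g.2 = 1 ->
  [/\ g.1.1 != 0, g.1.2 != 0 & g.2 != 0].
Proof.
move=> det1; have : g.1.1 * g.1.2 * g.2 != 0 by rewrite det1 oner_neq0.
by rewrite !mulf_eq0 !negb_or => /andP[/andP[-> ->] ->].
Qed.

Lemma chr_ldiv (g : gelt) (u v : lmon) :
  [/\ g.1.1 != 0, g.1.2 != 0 & g.2 != 0] ->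
  chr g (ldiv u v) = chr g u / chr g v.
Proof.
case: g => [[x y] z] /= [x0 y0 z0].
by rewrite /chr /ldiv /= !expfzDr // !invfM -!invr_expz; ring.
Qed.

Lemma samechar_inM {G : seq gelt} {u v : lmon} : diag_SL3_group G ->
  samechar G u v -> inM G (ldiv u v).
Proof.
case=> _ _ det1 same g Gg; have nz := SL3_diag_neq0 (det1 g Gg).
rewrite chr_ldiv // (same g Gg) divff //; case: g {Gg} nz => [[x y] z] [? ? ?].
by rewrite /chr !mulf_neq0 ?expfz_neq0.
Qed.

Lemma pairing_ldivN (e : pt) (u v : lmon) :
  pairing e (ldiv u v) = - pairing e (ldiv v u).
Proof.
by rewrite /pairing /ldiv /= !intrB; ring.
Qed.

Lemma pairing_lscale (e : pt) (k : int) (w : lmon) :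
  pairing e (lscale k w) = k%:~R * pairing e w.
Proof.
by rewrite /pairing /lscale /= !intrM; ring.
Qed.

Lemma Ggraph_quotient_on_edge {G : seq gelt} {e f g g' : pt} {r r' : nmon} :
  Ggraph_elt G e f g r -> Ggraph_elt G e f g' r' ->
  samechar G (toL r) (toL r') ->
  pairing e (ldiv (toL r') (toL r)) = 0 /\ pairing f (ldiv (toL r') (toL r)) = 0.
Proof.
move=> Hr Hr' same.
have [e_ge0 f_ge0 _] := Hr r' (fun h Gh => esym (same h Gh)).
have [e_le0 f_le0 _] := Hr' r same.
move: e_le0 f_le0; rewrite !(pairing_ldivN _ (toL r)) !oppr_ge0 => e_le0 f_le0.
by split; apply/le_anti/andP; split.
Qed.

Lemma ldiv_toL_eq0 (u v : nmon) : ldiv (toL u) (toL v) = (0, 0, 0) -> u = v.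
Proof.
case: u v => [[u1 u2] u3] [[v1 v2] v3]; rewrite /ldiv /toL /= => -[h1 h2 h3].
by congr (_, _, _); lia.
Qed.

Lemma coprime_shift_le {a b c d : nat} {k : int} : minn c d = 0%N -> k < 0 ->
  a%:Z - b%:Z = k * (c%:Z - d%:Z) -> (c <= b)%N /\ (d <= a)%N.
Proof. by move=> cd0 k_lt0 shift; split; nia. Qed.

Lemma mdvd_of_shift {m m' r r' : nmon} {k : int} : mcoprime m m' -> k < 0 ->
  ldiv (toL r') (toL r) = lscale k (ldiv (toL m) (toL m')) ->
  mdvd m r /\ mdvd m' r'.
Proof.
case: m m' r r' => [[m1 m2] m3] [[n1 n2] n3] [[r1 r2] r3] [[s1 s2] s3].
rewrite /mcoprime /mdvd /ldiv /lscale /toL /= => -[c1 c2 c3] k_lt0 [h1 h2 h3].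
have [? ?] := coprime_shift_le c1 k_lt0 h1.
have [? ?] := coprime_shift_le c2 k_lt0 h2.
by have [? ?] := coprime_shift_le c3 k_lt0 h3.
Qed.

(* Lemma 2.1: only the G-graph property of r, r', the carving of the edge
   and the labelling g(m'/m) > 0 are needed. *)
Theorem lemma2p1 (G : seq gelt) (HG : diag_SL3_group G)
  (S : seq triangle) (HS : triangulation G S) (HY : GHilb_family G S)
  (e f g g' : pt) (Hsig : tri_in S e f g) (Hsig' : tri_in S e f g')
  (Hgg : g != g')
  (m m' : nmon) (Hcarve : carved G e f m m')
  (Hlab : 0 < pairing g (ldiv (toL m') (toL m)))
  (r r' : nmon) (Hr : Ggraph_elt G e f g r) (Hr' : Ggraph_elt G e f g' r')
  (Hchi : samechar G (toL r) (toL r'))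
  (Hne : r != r') :
  mdvd m r /\ mdvd m' r'.
Proof.
have same' : samechar G (toL r') (toL r) by move=> h Gh; rewrite Hchi.
have [e0 f0] := Ggraph_quotient_on_edge Hr Hr' Hchi.
case: Hcarve => coprime_mm' _ _ _ span.
have [k quot] := span _ (samechar_inM HG same') e0 f0.
apply: (mdvd_of_shift coprime_mm' _ quot).
have [_ _ g_ge0] := Hr r' same'.
have k_le0 : k <= 0.
  rewrite leNgt; apply/negP => k_gt0; move: g_ge0.
  by rewrite quot pairing_lscale pairing_ldivN mulrN oppr_ge0 leNgt mulr_gt0 ?ltr0z.
have k_neq0 : k != 0.
  by apply: contraNneq Hne => k0; apply/eqP/esym/ldiv_toL_eq0; rewrite quot k0 /lscale !mul0r.
by rewrite lt_neqAle k_neq0.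
Qed.
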